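(* A regular $n$-tournament is $(n-1)$-spectrally monomorphic if and only if it is $(n-1)$-skew-spectrally monomorphic.
   Context: An $n$-tournament is a digraph in which every pair of distinct vertices is joined by exactly one arc. Its adjacency matrix $A=(a_{ij})$ has $a_{ij}=1$ if $v_i$ dominates $v_j$ and $0$ otherwise; its skew-adjacency matrix is $S=A-A^{\top}$. A tournament is regular if all its vertices have the same out-degree. A tournament is $k$-spectrally monomorphic (resp. $k$-skew-spectrally monomorphic) if all $k\times k$ principal submatrices of $A$ (resp. of $S$) have the same characteristic polynomial $\det(zI-M)$. *)

From mathcomp Require Import all_boot all_order all_algebra.
Set Implicit Arguments. Unset Strict Implicit. Unset Printing Implicit Defensive.
Import GRing.Theory.
Local Open Scope ring_scope.

(* A tournament on vertex set 'I_n: relation [dom i j] = "v_i dominates v_j". *)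
Definition is_tournament (n : nat) (dom : rel 'I_n) : Prop :=
  (forall i, ~~ dom i i) /\
  (forall i j, i != j -> dom i j (+) dom j i).

Definition regular_tournament (n : nat) (dom : rel 'I_n) : Prop :=
  forall i j : 'I_n, #|[set k | dom i k]| = #|[set k | dom j k]|.

Definition adj_mx (n : nat) (dom : rel 'I_n) : 'M[int]_n :=
  \matrix_(i, j) (dom i j)%:R.

Definition skew_mx (n : nat) (dom : rel 'I_n) : 'M[int]_n :=
  adj_mx dom - (adj_mx dom)^T.

Definition principal_submx (R : Type) (n : nat) (M : 'M[R]_n) (S : {set 'I_n})
  : 'M[R]_#|S| :=
  \matrix_(i, j) M (enum_val i) (enum_val j).

Definition k_spec_mono (n k : nat) (M : 'M[int]_n) : Prop :=
  forall S1 S2 : {set 'I_n}, #|S1| = k -> #|S2| = k ->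
    char_poly (principal_submx M S1) = char_poly (principal_submx M S2).

Definition spectrally_monomorphic (n k : nat) (dom : rel 'I_n) : Prop :=
  k_spec_mono k (adj_mx dom).

Definition skew_spectrally_monomorphic (n k : nat) (dom : rel 'I_n) : Prop :=
  k_spec_mono k (skew_mx dom).

From mathcomp Require Import all_boot all_order all_algebra all_fingroup.
From mathcomp Require Import ring.
Set Implicit Arguments. Unset Strict Implicit. Unset Printing Implicit Defensive.
Import GRing.Theory Num.Theory.
Local Open Scope ring_scope.

(* The characteristic polynomials of the principal submatrices of order [n - 1] of [M]
   are the diagonal cofactors of [zI - M], so [(n - 1)]-spectral monomorphy says that
   these cofactors coincide.  In a tournament [A + A^T = J - I], hence [S = 2A + I - J]
   and [(2z + 1)I - S = 2(zI - A) + J].  When the tournament is regular, all row and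
   column sums of [A] equal [(n - 1)/2], so [N = 2(zI - A)] satisfies
   [NJ = JN = (2z - n + 1)J].  The Sherman-Morrison formula then writes [adj (N + J)]
   as a combination of [adj N] and [J], so [N] and [N + J] have constant diagonal
   cofactors simultaneously. *)

Definition const_diag_cofactor (R : comPzRingType) n (M : 'M[R]_n) : Prop :=
  forall i j, cofactor M i i = cofactor M j j.

Lemma const_diag_cofactor_map (R S : comPzRingType) (f : {rmorphism R -> S}) n
    (M : 'M[R]_n) :
  injective f -> const_diag_cofactor (map_mx f M) <-> const_diag_cofactor M.
Proof.
move=> f_inj; split=> cM i j; last by rewrite !cofactor_map_mx (cM i j).
by apply: f_inj; rewrite -!cofactor_map_mx.
Qed.

Lemma const_diag_cofactorZ (R : idomainType) n (a : R) (M : 'M[R]_n) :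
  a != 0 -> const_diag_cofactor (a *: M) <-> const_diag_cofactor M.
Proof.
move=> a0; have an0 : a ^+ n.-1 != 0 by rewrite expf_neq0.
split=> cM i j; last by rewrite !cofactorZ (cM i j).
by apply: (mulfI an0); rewrite -!cofactorZ.
Qed.

Lemma mul_const_mx1 (R : pzSemiRingType) n :
  (const_mx 1 : 'M[R]_n) *m (const_mx 1 : 'M[R]_n) = n%:R *: (const_mx 1 : 'M[R]_n).
Proof.
apply/matrixP=> i j; rewrite !mxE.
under eq_bigr do rewrite !mxE mulr1.
by rewrite sumr_const card_ord mulr1.
Qed.

Section ConstMxUpdate.
Variables (R : idomainType) (n : nat).
Local Notation J := (const_mx 1 : 'M[R]_n).

Variables (N : 'M[R]_n) (c s : R).
Hypotheses (NJ : N *m J = c *: J) (JN : J *m N = c *: J).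

(* Sherman-Morrison: [c (c + n s) adj N - s det N J] is [c (c + n s) det N] times an
   inverse of [N + s J]. *)
Lemma scale_adj_add_const_mx :
  \det (N + s *: J) *: ((c * (c + n%:R * s)) *: \adj N - (s * \det N) *: J)
  = (c * (c + n%:R * s) * \det N) *: \adj (N + s *: J).
Proof.
set a := c * (c + n%:R * s); set Y := a *: \adj N - (s * \det N) *: J.
have JadjN : c *: (J *m \adj N) = \det N *: J.
  by rewrite scalemxAl -JN -mulmxA mul_mx_adj mul_mx_scalar.
have MY : (N + s *: J) *m Y = (a * \det N)%:M.
  rewrite mulmxDl !mulmxBr -!scalemxAr -!scalemxAl mul_mx_adj NJ mul_const_mx1.
  have -> : a *: (s *: (J *m \adj N)) = (s * (c + n%:R * s)) *: (\det N *: J).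
    by rewrite -JadjN !scalerA /a; congr (_ *: _); ring.
  rewrite !scalerA scale_scalar_mx -[RHS]addr0 -addrA; congr (_ + _).
  by rewrite -scalerBl -scaleNr -scalerDl [_ + _](_ : _ = 0) ?scale0r //; ring.
have := congr1 (mulmx (\adj (N + s *: J))) MY.
by rewrite mulmxA mul_adj_mx mul_scalar_mx mul_mx_scalar.
Qed.

Lemma const_diag_cofactor_add_const_mx :
  c != 0 -> c + n%:R * s != 0 -> \det N != 0 -> \det (N + s *: J) != 0 ->
  const_diag_cofactor N <-> const_diag_cofactor (N + s *: J).
Proof.
move=> c0 cs0 dN0 dM0.
have a0 : c * (c + n%:R * s) != 0 by rewrite mulf_neq0.
have E i : \det (N + s *: J) * (c * (c + n%:R * s) * cofactor N i i - s * \det N)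
         = c * (c + n%:R * s) * \det N * cofactor (N + s *: J) i i.
  have := congr1 (fun B : 'M[R]_n => B i i) scale_adj_add_const_mx.
  by rewrite /= !mxE mulr1.
split=> cM i j.
  by apply: (mulfI (mulf_neq0 a0 dN0)); rewrite -!E (cM i j).
apply: (mulfI a0); apply: (addIr (- (s * \det N))); apply: (mulfI dM0).
by rewrite !E (cM i j).
Qed.
End ConstMxUpdate.

Lemma det_mxsub_reindex (R : comPzRingType) m k l (X : 'M[R]_m)
    (g : 'I_k -> 'I_m) (h : 'I_l -> 'I_m) :
  k = l -> injective g -> injective h -> (forall i, exists j, h j = g i) ->
  \det (mxsub g g X) = \det (mxsub h h X).
Proof.
move=> kl; subst l => g_inj h_inj gh.
pose f i := odflt i [pick j | h j == g i].
have hf i : h (f i) = g i.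
  rewrite /f; case: pickP => [j /eqP //|none]; have [j hj] := gh i.
  by have := none j; rewrite hj eqxx.
have f_inj : injective f by move=> i j fij; apply: g_inj; rewrite -!hf fij.
pose p := perm f_inj.
have -> : mxsub g g X = row_perm p (col_perm p (mxsub h h X)).
  by apply/matrixP=> i j; rewrite !mxE !permE !hf.
rewrite row_permE col_permE !det_mulmx !det_perm odd_permV.
by rewrite mulrCA -signr_addb addbb expr0 mulr1.
Qed.

Lemma det_principal_submx_setC1 (R : comPzRingType) n (X : 'M[R]_n.+1) v :
  \det (principal_submx X [set~ v]) = cofactor X v v.
Proof.
have card_setC1 : #|[set~ v]| = n by rewrite cardsC1 card_ord.
rewrite /cofactor -signr_odd oddD addbb expr0 mul1r.
have -> : row' v (col' v X) = mxsub (lift v) (lift v) X.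
  by apply/matrixP=> i j; rewrite !mxE.
apply: (det_mxsub_reindex _ card_setC1 enum_val_inj (@lift_inj _ v)) => i.
by have := enum_valP i; rewrite !inE eq_sym => /unlift_some [j -> _]; exists j.
Qed.

Lemma char_poly_principal_submx (R : nzRingType) n (M : 'M[R]_n) S :
  char_poly (principal_submx M S) = \det (principal_submx (char_poly_mx M) S).
Proof.
rewrite /char_poly; congr (\det _); apply/matrixP=> i j.
by rewrite !mxE (inj_eq enum_val_inj).
Qed.

Lemma card_predn_setC1 n (S : {set 'I_n.+1}) : #|S| = n -> exists v, S = [set~ v].
Proof.
move=> cardS; have /cards1P [v Sv] : #|~: S| == 1%N.
  by rewrite cardsCs setCK card_ord cardS -addn1 addKn.
by exists v; rewrite -Sv setCK.
Qed.

Lemma k_spec_mono_predn n (M : 'M[int]_n.+1) :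
  k_spec_mono n M <-> const_diag_cofactor (char_poly_mx M).
Proof.
split=> [spec v w | cM S1 S2 /card_predn_setC1 [v ->] /card_predn_setC1 [w ->]].
  by rewrite -!det_principal_submx_setC1 -!char_poly_principal_submx;
    apply: spec; rewrite cardsC1 card_ord.
by rewrite !char_poly_principal_submx !det_principal_submx_setC1.
Qed.

Lemma k_spec_mono0 k (M : 'M[int]_0) : k_spec_mono k M.
Proof. by move=> S1 S2 _ _; have -> : S1 = S2 by apply/setP => -[]. Qed.

Lemma char_poly_mx_mul_const_mx (R : comNzRingType) n (M : 'M[R]_n) d :
  M *m const_mx 1 = d *: (const_mx 1 : 'M_n) ->
  char_poly_mx M *m const_mx 1 = ('X - d%:P) *: (const_mx 1 : 'M_n).
Proof.
move=> MJ; rewrite mulmxBl mul_scalar_mx.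
rewrite [X in _ *m X](_ : _ = map_mx polyC (const_mx 1)); last by rewrite map_const_mx.
by rewrite -map_mxM MJ map_mxZ map_const_mx scalerBl.
Qed.

Lemma const_mx_mul_char_poly_mx (R : comNzRingType) n (M : 'M[R]_n) d :
  const_mx 1 *m M = d *: (const_mx 1 : 'M_n) ->
  const_mx 1 *m char_poly_mx M = ('X - d%:P) *: (const_mx 1 : 'M_n).
Proof.
move=> JM; rewrite mulmxBr mul_mx_scalar.
rewrite [X in X *m _](_ : _ = map_mx polyC (const_mx 1)); last by rewrite map_const_mx.
by rewrite -map_mxM JM map_mxZ map_const_mx scalerBl.
Qed.

Section Tournament.
Variables (n : nat) (dom : rel 'I_n).
Hypothesis tour : is_tournament dom.
Local Notation A := (adj_mx dom).
Local Notation J := (const_mx 1 : 'M[int]_n).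

Lemma adj_mx_add_tr : A + A^T = J - 1%:M.
Proof.
apply/matrixP=> i j; rewrite !mxE; case: eqVneq => [->|ij].
  by rewrite (negPf (tour.1 j)).
by have := tour.2 i j ij; case: (dom i j); case: (dom j i).
Qed.

Lemma skew_mx_adj : skew_mx dom = A *+ 2 + 1%:M - J.
Proof.
have -> : skew_mx dom = A - (J - 1%:M - A) by rewrite -adj_mx_add_tr addrAC subrr add0r.
by apply/matrixP=> i j; rewrite !mxE; ring.
Qed.

Lemma char_poly_mx_skew_comp :
  map_mx (comp_poly (2%:P * 'X + 1)) (char_poly_mx (skew_mx dom))
  = 2%:P *: char_poly_mx A + const_mx 1.
Proof.
apply/matrixP=> i j; rewrite skew_mx_adj !mxE.
rewrite rmorphB rmorphMn /= comp_polyX comp_polyC.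
by case: (i == j); rewrite ?mulr1n ?mulr0n !(polyCD, polyCN, polyC1, polyC0); ring.
Qed.
End Tournament.

Section RegularTournament.
Variables (n : nat) (dom : rel 'I_n).
Hypotheses (tour : is_tournament dom) (reg : regular_tournament dom).
Local Notation A := (adj_mx dom).
Local Notation J := (const_mx 1 : 'M[int]_n).
Local Notation outdeg v := (#|[set k | dom v k]|%:R : int).

Lemma adj_mx_mul_const_mx v : A *m J = outdeg v *: J.
Proof.
apply/matrixP=> i j; rewrite !mxE mulr1 -(reg i v).
under eq_bigr do rewrite !mxE mulr1.
rewrite -sum1_card natr_sum [RHS]big_mkcond; apply: eq_bigr => k _.
by rewrite inE; case: (dom i k).
Qed.

Lemma const_mx_mul_adj_mx_compl v : J *m A = (n%:R - 1 - outdeg v) *: J.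
Proof.
have JAt : J *m A^T = outdeg v *: J.
  by rewrite -[J]trmx_const -trmx_mul (adj_mx_mul_const_mx v) linearZ /= trmx_const.
have : J *m (A + A^T) = (n%:R - 1) *: J.
  by rewrite adj_mx_add_tr // mulmxBr mul_const_mx1 mulmx1 scalerBl scale1r.
by rewrite mulmxDr JAt => JAJ; rewrite scalerBl -JAJ addrK.
Qed.

Lemma regular_tournament_outdeg v : outdeg v *+ 2 + 1 = n%:R.
Proof.
have := mulmxA J A J; rewrite (adj_mx_mul_const_mx v) (const_mx_mul_adj_mx_compl v).
rewrite -scalemxAl -scalemxAr mul_const_mx1 !scalerA.
move=> /(congr1 (fun B : 'M[int]_n => B v v)); rewrite !mxE !mulr1.
have n0 : n%:R != 0 :> int by rewrite pnatr_eq0 -lt0n (leq_ltn_trans _ (ltn_ord v)).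
by move=> /(mulIf n0) dn; rewrite mulr2n {1}dn; ring.
Qed.

Lemma const_mx_mul_adj_mx v : J *m A = outdeg v *: J.
Proof.
rewrite (const_mx_mul_adj_mx_compl v) -(regular_tournament_outdeg v) mulr2n.
by congr (_ *: _); ring.
Qed.
End RegularTournament.

Lemma size_2X_add1 : size (2%:P * 'X + 1 : {poly int}) = 2%N.
Proof. by rewrite -polyC1 size_MXaddC polyC_eq0 size_polyC. Qed.

Lemma comp_2X_add1_inj : injective (comp_poly (2%:P * 'X + 1 : {poly int})).
Proof.
by apply: raddf_inj => p /eqP; rewrite comp_poly2_eq0 ?size_2X_add1 // => /eqP.
Qed.

Section RegularTournamentSpectra.
Variables (n : nat) (dom : rel 'I_n.+1).
Hypotheses (tour : is_tournament dom) (reg : regular_tournament dom).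
Local Notation A := (adj_mx dom).
Local Notation S := (skew_mx dom).
Local Notation J := (const_mx 1 : 'M[{poly int}]_n.+1).
Local Notation d := (#|[set k | dom ord0 k]|%:R : int).

Lemma char_poly_mx_adj_mul_const_mx :
  (2%:P *: char_poly_mx A) *m J = (2%:P * ('X - d%:P)) *: J.
Proof.
by rewrite -scalemxAl (char_poly_mx_mul_const_mx (adj_mx_mul_const_mx reg ord0)) scalerA.
Qed.

Lemma const_mx_mul_char_poly_mx_adj :
  J *m (2%:P *: char_poly_mx A) = (2%:P * ('X - d%:P)) *: J.
Proof.
rewrite -scalemxAr (const_mx_mul_char_poly_mx (const_mx_mul_adj_mx tour reg ord0)).
by rewrite scalerA.
Qed.

Lemma const_diag_cofactor_adj_skew :
  const_diag_cofactor (char_poly_mx A) <-> const_diag_cofactor (char_poly_mx S).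
Proof.
have two0 : 2%:P != 0 :> {poly int} by rewrite polyC_eq0.
rewrite -(const_diag_cofactorZ _ two0).
rewrite (const_diag_cofactor_add_const_mx (s := 1) char_poly_mx_adj_mul_const_mx
                                           const_mx_mul_char_poly_mx_adj).
- rewrite scale1r -(char_poly_mx_skew_comp tour) const_diag_cofactor_map //.
  exact: comp_2X_add1_inj.
- by rewrite mulf_neq0 // -size_poly_eq0 size_XsubC.
- rewrite mulr1 -polyC_natr -(regular_tournament_outdeg tour reg ord0).
  rewrite rmorphD rmorphMn /= polyC1 (_ : _ + _ = 2%:P * 'X + 1); last first.
    by rewrite mulr2n; ring.
  by rewrite -size_poly_eq0 size_2X_add1.
- by rewrite detZ mulf_neq0 ?expf_neq0 // monic_neq0 // char_poly_monic.
rewrite scale1r -(char_poly_mx_skew_comp tour) det_map_mx /=.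
rewrite comp_poly2_eq0 ?size_2X_add1 //.
exact/monic_neq0/char_poly_monic.
Qed.
End RegularTournamentSpectra.

Theorem proposition5p4 (n : nat) (dom : rel 'I_n) :
  is_tournament dom -> regular_tournament dom ->
  (spectrally_monomorphic n.-1 dom <-> skew_spectrally_monomorphic n.-1 dom).
Proof.
case: n dom => [|n] dom tour reg; first by split=> _; apply: k_spec_mono0.
rewrite /spectrally_monomorphic /skew_spectrally_monomorphic /= !k_spec_mono_predn.
exact: const_diag_cofactor_adj_skew.
Qed.
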